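(* Let $\mathscr T$ be a functor satisfying (T1)–(T4), and let $\Gamma$, $\Psi$ be as described below. For each $\mathscr T$-based orthomodular dynamic algebra $\mathfrak K$ and $k\in K$, let $S_k\subseteq\mathscr T(K)$ be the unique subset with $k=\bigsqcup S_k$, and define $\lambda_{\mathfrak K}\colon K\to\mathscr P(\mathscr T(\mathbf{Lin}(\widetilde{\mathfrak K})))$ by $\lambda_{\mathfrak K}(k)=\{\nu_{\mathfrak K}(s)\mid s\in S_k\}$, where $\nu_{\mathfrak K}(s)=s\bullet(-)\colon\widetilde K\to\widetilde K$. Then $\lambda=(\lambda_{\mathfrak K})_{\mathfrak K}$ is a natural isomorphism $1_{\mathscr T\mathbb{ODA}}\Rightarrow\Gamma\circ\Psi$.
   Context: $\Gamma(\mathcal M)=\mathscr P(\mathscr T(\mathbf{Lin}(\mathcal M)))$, $\Gamma(k)(A)=\{k\circ a\circ k^{-1}\mid a\in A\}$; $\Psi(\mathfrak K)=(\widetilde K,\preceq,{}^\perp)$, $\Psi(\phi)=\phi|_{\widetilde K}$. (The existence and uniqueness of $S_k$ holds for $\mathscr T$-based orthomodular dynamic algebras.) An involutive unital quantale is $(Q,\bigsqcup,\odot,{}^*,e)$: complete join-semilattice $Q$, associative $\odot$ distributing over arbitrary joins in each argument, unit $e$, ${}^*$ with $x^{**}=x$, $(x\odot y)^*=y^*\odot x^*$, $(\bigsqcup x_i)^*=\bigsqcup x_i^*$. An involutive generalized dynamic algebra (IDA) is such a quantale with ${\sim}\colon K\to K$ satisfying, for all $x,y$ and families $(x_i)$: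 ${\sim}(x\odot{\sim}{\sim}y)={\sim}(x\odot y)$; ${\sim}(\bigsqcup{\sim}{\sim}x_i)={\sim}(\bigsqcup x_i)$; $({\sim}x)^*={\sim}x$; ${\sim}{\sim}({\sim}{\sim}x\odot y)={\sim}({\sim}x\sqcup{\sim}({\sim}x\sqcup y))$. Test set $\widetilde K=\{{\sim}k\}$; $\bigvee W={\sim}{\sim}\bigsqcup W$; $w^\perp={\sim}w$; $k\preceq l$ iff $\bigvee\{k,l\}=l$; $k\bullet v={\sim}{\sim}(k\odot v)$; $k\equiv l$ iff $k\bullet w=l\bullet w$ for all $w\in\widetilde K$. IDA morphisms preserve arbitrary joins, $\odot$, ${}^*$, unit, ${\sim}$ (category $\mathbb{IDA}$); semi-Foulis means $(\widetilde K,\preceq,{}^\perp)$ is a complete orthomodular lattice. $\mathbb{IM}$: involutive monoids and homomorphisms. For a complete orthomodular lattice $\mathcal M$: $\pi_m(x)=m\wedge(m^\perp\vee x)$; $\mathbf{Lin}(\mathcal M)$ is the set of maps $f$ admitting $f^*$ with $f(x)\le y^\perp\iff x\le f^*(y)^\perp$, an IDA under pointwise joins, composition, ${}^*$, $\mathrm{id}$, ${\sim}f=\pi_{f(1)^\perp}$. For an involutive submonoid $L\supseteq\{\pi_m\}$, $\mathscr P(L)$ is the IDA of subsets of $L$ with union, setwise composition and involution, unit $\{\mathrm{id}\}$, ${\sim}A=\{\pi_{(\bigvee_{a\in A}a(1))^\perp}\}$. $\mathscr T\colon\mathbb{IDA}\to\mathbb{IM}$ satisfies: (T1) $\widetilde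 K\subseteq\mathscr T(K)\subseteq K$, $\mathscr T(K)$ an involutive submonoid; (T2) for semi-Foulis $\mathfrak K$ with $s=t\iff s\equiv t$ on $\mathscr T(K)$, $\nu_{\mathfrak K}\colon k\mapsto k\bullet(-)$ is an isomorphism $\mathscr T(\mathfrak K)\to\mathscr T(\mathbf{Lin}(\widetilde{\mathfrak K}))$; (T3) $f\mapsto\{f\}$ is an isomorphism $\mathscr T(\mathbf{Lin}(\mathcal M))\to\mathscr T(\mathscr P(\mathscr T(\mathbf{Lin}(\mathcal M))))$; (T4) $\mathscr T(f)$ is the restriction of $f$. A $\mathscr T$-based orthomodular dynamic algebra is an IDA with: (TODA1) $(\widetilde K,\preceq,{}^\perp)$ a complete orthomodular lattice; (TODA2) every $A$ with $\mathscr T(K)\subseteq A\subseteq K$ closed under $\odot$, ${}^*$, arbitrary joins equals $K$; (TODA3) for $S,T\subseteq\mathscr T(K)$, $\bigsqcup S=\bigsqcup T$ iff $S=T$; (TODA4) for $s,t\in\mathscr T(K)$, $s=t$ iff $s\equiv t$. $\mathscr T\mathbb{ODA}$: these objects with bijective IDA morphisms. $\mathbb{COL}$: complete orthomodular lattices with ortholattice isomorphisms. *)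

From Stdlib Require Import ClassicalEpsilon.


Definition is_lub {T : Type} (le : T -> T -> Prop) (W : T -> Prop) (x : T) : Prop :=
  (forall w, W w -> le w x) /\ (forall y, (forall w, W w -> le w y) -> le x y).

Definition is_partial_order {T : Type} (le : T -> T -> Prop) : Prop :=
  (forall x, le x x) /\ (forall x y, le x y -> le y x -> x = y) /\
  (forall x y z, le x y -> le y z -> le x z).

Definition bijective {A B : Type} (f : A -> B) : Prop :=
  exists g : B -> A, (forall x, g (f x) = x) /\ (forall y, f (g y) = y).

Record COLsig := {
  ccar :> Type;
  cle : ccar -> ccar -> Prop;
  cperp : ccar -> ccar;
  csup : (ccar -> Prop) -> ccar }.

Section COLops.
Context {M : COLsig}.
Definition cjoin2 (x y : M) : M := csup M (fun z => z = x \/ z = y).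
Definition cmeet2 (x y : M) : M := csup M (fun z => cle M z x /\ cle M z y).
Definition cbot : M := csup M (fun _ => False).
Definition ctop : M := csup M (fun _ => True).
Definition pi_ (m : M) (x : M) : M := cmeet2 m (cjoin2 (cperp M m) x).
End COLops.

Definition isCOL (M : COLsig) : Prop :=
  is_partial_order (cle M) /\
  (forall W : M -> Prop, is_lub (cle M) W (csup M W)) /\
  (forall x : M, cperp M (cperp M x) = x) /\
  (forall x y : M, cle M x y -> cle M (cperp M y) (cperp M x)) /\
  (forall x : M, cmeet2 x (cperp M x) = @cbot M) /\
  (forall x : M, cjoin2 x (cperp M x) = @ctop M) /\
  (forall x y : M, cle M x y -> y = cjoin2 x (cmeet2 y (cperp M x))).

Definition is_OL_iso {M N : COLsig} (k : M -> N) : Prop :=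
  bijective k /\
  (forall x y, cle M x y <-> cle N (k x) (k y)) /\
  (forall x, k (cperp M x) = cperp N (k x)).

Record IDAsig := {
  car :> Type;
  ijoin : (car -> Prop) -> car;
  imul : car -> car -> car;
  istar : car -> car;
  iunit : car;
  isim : car -> car }.

Section IDAops.
Context {K : IDAsig}.
Definition pair2 (x y : K) : K -> Prop := fun z => z = x \/ z = y.
Definition ijoin2 (x y : K) : K := ijoin K (pair2 x y).
Definition ile (x y : K) : Prop := ijoin2 x y = y.
Definition image {A B : Type} (f : A -> B) (W : A -> Prop) : B -> Prop :=
  fun b => exists a, W a /\ b = f a.

Definition test (k : K) : Prop := exists l : K, k = isim K l.
Definition TestT : Type := { k : K | test k }.
Definition vee (W : K -> Prop) : K := isim K (isim K (ijoin K W)).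
Definition dot (k v : K) : K := isim K (isim K (imul K k v)).
Definition tle (k l : K) : Prop := vee (pair2 k l) = l.
Definition equivK (k l : K) : Prop := forall w : K, test w -> dot k w = dot l w.
End IDAops.
Arguments TestT : clear implicits.

Definition is_IDA (K : IDAsig) : Prop :=
  is_partial_order (@ile K) /\
  (forall W : K -> Prop, is_lub (@ile K) W (ijoin K W)) /\
  (forall x y z : K, imul K x (imul K y z) = imul K (imul K x y) z) /\
  (forall x : K, imul K (iunit K) x = x) /\
  (forall x : K, imul K x (iunit K) = x) /\
  (forall (x : K) W, imul K x (ijoin K W) = ijoin K (image (imul K x) W)) /\
  (forall (x : K) W, imul K (ijoin K W) x = ijoin K (image (fun y => imul K y x) W)) /\
  (forall x : K, istar K (istar K x) = x) /\
  (forall x y : K, istar K (imul K x y) = imul K (istar K y) (istar K x)) /\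
  (forall W, istar K (ijoin K W) = ijoin K (image (istar K) W)) /\
  (forall x y : K, isim K (imul K x (isim K (isim K y))) = isim K (imul K x y)) /\
  (forall W, isim K (ijoin K (image (fun x => isim K (isim K x)) W)) = isim K (ijoin K W)) /\
  (forall x : K, istar K (isim K x) = isim K x) /\
  (forall x y : K, isim K (isim K (imul K (isim K (isim K x)) y)) =
                   isim K (ijoin2 (isim K x) (isim K (ijoin2 (isim K x) y)))).

Record IDA_morph {K L : IDAsig} (f : K -> L) : Prop := {
  morph_join : forall W, f (ijoin K W) = ijoin L (image f W);
  morph_mul : forall x y, f (imul K x y) = imul L (f x) (f y);
  morph_star : forall x, f (istar K x) = istar L (f x);
  morph_unit : f (iunit K) = iunit L;
  morph_sim : forall x, f (isim K x) = isim L (f x) }.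
Arguments morph_join {K L f}.
Arguments morph_mul {K L f}.
Arguments morph_star {K L f}.
Arguments morph_unit {K L f}.
Arguments morph_sim {K L f}.

Definition Psi_perp {K : IDAsig} (a : TestT K) : TestT K :=
  exist _ (isim K (proj1_sig a)) (ex_intro _ (proj1_sig a) eq_refl).

Definition Psi_vee {K : IDAsig} (W : TestT K -> Prop) : TestT K :=
  exist _ (vee (fun k => exists t, W t /\ k = proj1_sig t))
        (ex_intro _ _ eq_refl).

Definition Psi_le {K : IDAsig} (a b : TestT K) : Prop := tle (proj1_sig a) (proj1_sig b).

Definition Psi_sup {K : IDAsig} (W : TestT K -> Prop) : TestT K :=
  match excluded_middle_informative (exists x, is_lub (@Psi_le K) W x) with
  | left h => proj1_sig (constructive_indefinite_description _ h)
  | right _ => Psi_vee W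
  end.

Definition Psi (K : IDAsig) : COLsig :=
  {| ccar := TestT K; cle := @Psi_le K; cperp := @Psi_perp K; csup := @Psi_sup K |}.

Definition semiFoulis (K : IDAsig) : Prop := isCOL (Psi K).

Definition Psi_map {K L : IDAsig} (f : K -> L)
  (H : forall x, f (isim K x) = isim L (f x)) (t : TestT K) : TestT L.
Proof.
  refine (exist _ (f (proj1_sig t)) _).
  destruct (proj2_sig t) as [l Hl]. exists (f l). rewrite Hl. apply H.
Defined.

Definition nu {K : IDAsig} (s : K) : TestT K -> TestT K :=
  fun v => exist _ (dot s (proj1_sig v)) (ex_intro _ _ eq_refl).

Section Lin.
Variable M : COLsig.

Definition is_adjoint (f g : M -> M) : Prop :=
  forall x y : M, cle M (f x) (cperp M y) <-> cle M x (cperp M (g y)).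
Definition has_adj (f : M -> M) : Prop := exists g, is_adjoint f g.
Definition LinT : Type := { f : M -> M | has_adj f }.

(* the adjoint f^* (unique in a complete orthomodular lattice) *)
Definition lin_adj (f : LinT) : M -> M :=
  proj1_sig (constructive_indefinite_description _ (proj2_sig f)).

Definition idLin : LinT :=
  exist has_adj (fun x => x) (ex_intro (is_adjoint (fun x => x)) (fun x => x) (fun x y => iff_refl _)).

(* Lin(M) is closed under all the operations below (the paper shows it is an
   IDA); to keep the operations total without proofs we take a map g to its
   element of Lin(M) when g admits an adjoint (always the case for the maps
   below), and to the identity otherwise. *)
Definition mkLin (g : M -> M) : LinT :=
  match excluded_middle_informative (has_adj g) with
  | left h => exist _ g h
  | right _ => idLin
  end.

Definition Lin : IDAsig := {|
  car := LinT;
  ijoin := fun F => mkLin (fun x => csup M (fun z => exists f, F f /\ z = proj1_sig f x));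
  imul := fun f g => mkLin (fun x => proj1_sig f (proj1_sig g x));
  istar := fun f => mkLin (lin_adj f);
  iunit := idLin;
  isim := fun f => mkLin (pi_ (cperp M (proj1_sig f (@ctop M)))) |}.

Definition Pset (L : LinT -> Prop) : IDAsig := {|
  car := { f : LinT | L f } -> Prop;
  ijoin := fun AA c => exists A, AA A /\ A c;
  imul := fun A B c => exists a b, A a /\ B b /\
            proj1_sig (proj1_sig c) = (fun x => proj1_sig (proj1_sig a) (proj1_sig (proj1_sig b) x));
  istar := fun A c => exists a, A a /\ proj1_sig (proj1_sig c) = lin_adj (proj1_sig a);
  iunit := fun c => proj1_sig (proj1_sig c) = (fun x => x);
  isim := fun A c => proj1_sig (proj1_sig c) =
            pi_ (cperp M (csup M (fun z => exists a, A a /\ z = proj1_sig (proj1_sig a) (@ctop M)))) |}.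

End Lin.

(* The functor T : IDA -> IM, given by its object part T(K) ⊆ K; by (T4)  *)
(* T(f) is the restriction of f, so functoriality says that IDA morphisms *)
(* map T(K) into T(L).                                                   *)

Definition Tfun := forall K : IDAsig, K -> Prop.

Definition T_functor (T : Tfun) : Prop :=
  forall (K L : IDAsig) (f : K -> L), is_IDA K -> is_IDA L -> IDA_morph f ->
    forall x, T K x -> T L (f x).

Definition T1 (T : Tfun) : Prop :=
  forall K : IDAsig, is_IDA K ->
    (forall k, test k -> T K k) /\
    T K (iunit K) /\
    (forall x y, T K x -> T K y -> T K (imul K x y)) /\
    (forall x, T K x -> T K (istar K x)).

Definition IM_iso {K L : IDAsig} (A : K -> Prop) (B : L -> Prop) (h : K -> L) : Prop :=
  (forall x, A x -> B (h x)) /\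
  (forall y, B y -> exists x, A x /\ h x = y) /\
  (forall x y, A x -> A y -> h x = h y -> x = y) /\
  (forall x y, A x -> A y -> h (imul K x y) = imul L (h x) (h y)) /\
  (forall x, A x -> h (istar K x) = istar L (h x)) /\
  h (iunit K) = iunit L.

Definition T2 (T : Tfun) : Prop :=
  forall K : IDAsig, is_IDA K -> semiFoulis K ->
    (forall s t, T K s -> T K t -> (s = t <-> equivK s t)) ->
    (forall s, T K s -> has_adj (Psi K) (nu s)) /\
    IM_iso (L := Lin (Psi K)) (T K) (T (Lin (Psi K))) (fun s => mkLin (Psi K) (nu s)).

Definition T3 (T : Tfun) : Prop :=
  forall M : COLsig, isCOL M ->
    IM_iso (L := Pset M (T (Lin M))) (T (Lin M)) (T (Pset M (T (Lin M))))
      (fun f c => proj1_sig c = f).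

Definition TODA (T : Tfun) (K : IDAsig) : Prop :=
  is_IDA K /\
  isCOL (Psi K) /\
  (forall A : K -> Prop,
     (forall x, T K x -> A x) ->
     (forall x y, A x -> A y -> A (imul K x y)) ->
     (forall x, A x -> A (istar K x)) ->
     (forall W, (forall x, W x -> A x) -> A (ijoin K W)) ->
     forall x, A x) /\
  (forall S S' : K -> Prop, (forall x, S x -> T K x) -> (forall x, S' x -> T K x) ->
     (ijoin K S = ijoin K S' <-> (forall x, S x <-> S' x))) /\
  (forall s t, T K s -> T K t -> (s = t <-> equivK s t)).

Definition TODA_morph {K L : IDAsig} (f : K -> L) : Prop := IDA_morph f /\ bijective f.

Definition TODA_iso {K L : IDAsig} (f : K -> L) : Prop :=
  TODA_morph f /\ exists g : L -> K, TODA_morph g /\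
     (forall x, g (f x) = x) /\ (forall y, f (g y) = y).

Definition Gamma (T : Tfun) (M : COLsig) : IDAsig := Pset M (T (Lin M)).

Definition Gamma_map (T : Tfun) {M N : COLsig} (k : M -> N) (kinv : N -> M)
  (A : Gamma T M) : Gamma T N :=
  fun c => exists a, A a /\
    proj1_sig (proj1_sig c) = (fun x => k (proj1_sig (proj1_sig a) (kinv x))).

Definition Sk (T : Tfun) {K : IDAsig} (k : K) : K -> Prop :=
  match excluded_middle_informative
          (exists S : K -> Prop, (forall s, S s -> T K s) /\ ijoin K S = k) with
  | left h => proj1_sig (constructive_indefinite_description _ h)
  | right _ => fun _ => False
  end.

Definition lambda (T : Tfun) {K : IDAsig} (k : K) : Gamma T (Psi K) :=
  fun c => exists s, Sk T k s /\ proj1_sig (proj1_sig c) = nu s.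

From Stdlib Require Import ClassicalEpsilon FunctionalExtensionality PropExtensionality ProofIrrelevance.

(** Every element k of a T-ODA K is the join of a unique subset S_k of T(K) (TODA2 gives
    existence, TODA3 uniqueness), and by (T2) the map nu is an isomorphism of involutive
    monoids from T(K) onto T(Lin(K~)).  Hence lambda_K, k |-> nu[S_k], is a bijection from K
    onto the subsets of T(Lin(K~)).  It preserves joins, products, the involution and the
    unit because these are computed elementwise on the decompositions S_k, and it preserves
    ~ because ~k is a test, whose nu-image is the Sasaki projection onto ~k.  A bijective IDA
    morphism transports all the T-ODA axioms, so Gamma(Psi K) is a T-ODA and lambda_K an
    isomorphism.  Naturality holds because an IDA morphism phi maps S_k onto S_(phi k), and
    nu (phi s) is nu s conjugated by Psi(phi). *)

Lemma pred_ext {A : Type} (P Q : A -> Prop) : (forall x, P x <-> Q x) -> P = Q.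
Proof.
  intro H; apply functional_extensionality; intro x; apply propositional_extensionality, H.
Qed.

Lemma sig_eq {A : Type} {P : A -> Prop} (x y : {a | P a}) :
  proj1_sig x = proj1_sig y -> x = y.
Proof. apply eq_sig_hprop; intros; apply proof_irrelevance. Qed.

Lemma can_inj {A B : Type} (g : B -> A) (f : A -> B) :
  (forall y, f (g y) = y) -> forall y1 y2, g y1 = g y2 -> y1 = y2.
Proof. intros fg y1 y2 H. rewrite <- (fg y1), <- (fg y2), H; reflexivity. Qed.

Lemma image_comp {A B C : Type} (g : B -> C) (h : A -> B) (W : A -> Prop) :
  image g (image h W) = image (fun x => g (h x)) W.
Proof.
  apply pred_ext; intro z; split.
  - intros (b & (a & Ha & ->) & ->); exists a; auto.
  - intros (a & Ha & ->); exists (h a); split; [exists a |]; auto.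
Qed.

Lemma image_id {A : Type} (W : A -> Prop) : image (fun x => x) W = W.
Proof. apply pred_ext; intro z; split; [intros (a & Ha & ->) | exists z]; auto. Qed.

Lemma image_single {A B : Type} (f : A -> B) (x : A) :
  image f (fun z => z = x) = (fun z => z = f x).
Proof. apply pred_ext; intro z; split; [intros (a & -> & ->) | intros ->; exists x]; auto. Qed.

Lemma image_pair {K L : IDAsig} (f : K -> L) (x y : K) :
  image f (pair2 x y) = pair2 (f x) (f y).
Proof.
  apply pred_ext; intro z; unfold pair2; split.
  - intros (a & [-> | ->] & ->); auto.
  - intros [-> | ->]; [exists x | exists y]; auto.
Qed.

Section IDATheory.
Context {K : IDAsig} (HK : is_IDA K).

Lemma ile_partial_order : is_partial_order (@ile K).
Proof. apply HK. Qed.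

Lemma ijoin_lub (W : K -> Prop) : is_lub (@ile K) W (ijoin K W).
Proof. apply HK. Qed.

Lemma imulA (x y z : K) : imul K x (imul K y z) = imul K (imul K x y) z.
Proof. apply HK. Qed.

Lemma imul_unitl (x : K) : imul K (iunit K) x = x.
Proof. apply HK. Qed.

Lemma imul_unitr (x : K) : imul K x (iunit K) = x.
Proof. apply HK. Qed.

Lemma imul_joinr (x : K) W : imul K x (ijoin K W) = ijoin K (image (imul K x) W).
Proof. apply HK. Qed.

Lemma imul_joinl (x : K) W : imul K (ijoin K W) x = ijoin K (image (fun y => imul K y x) W).
Proof. apply HK. Qed.

Lemma istarK (x : K) : istar K (istar K x) = x.
Proof. apply HK. Qed.

Lemma istar_mul (x y : K) : istar K (imul K x y) = imul K (istar K y) (istar K x).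
Proof. apply HK. Qed.

Lemma istar_join W : istar K (ijoin K W) = ijoin K (image (istar K) W).
Proof. apply HK. Qed.

Lemma isim_mul_simsim (x y : K) :
  isim K (imul K x (isim K (isim K y))) = isim K (imul K x y).
Proof. apply HK. Qed.

Lemma isim_join_simsim W :
  isim K (ijoin K (image (fun x => isim K (isim K x)) W)) = isim K (ijoin K W).
Proof. apply HK. Qed.

Lemma istar_sim (x : K) : istar K (isim K x) = isim K x.
Proof. apply HK. Qed.

Lemma simsim_mul_sasaki (x y : K) :
  isim K (isim K (imul K (isim K (isim K x)) y)) =
  isim K (ijoin2 (isim K x) (isim K (ijoin2 (isim K x) y))).
Proof. apply HK. Qed.

Lemma ile_refl (x : K) : ile x x.
Proof. apply (proj1 ile_partial_order). Qed.

Lemma ile_antisym (x y : K) : ile x y -> ile y x -> x = y.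
Proof. apply (proj2 ile_partial_order). Qed.

Lemma ile_trans (x y z : K) : ile x y -> ile y z -> ile x z.
Proof. apply (proj2 ile_partial_order). Qed.

Lemma ile_ijoin W (w : K) : W w -> ile w (ijoin K W).
Proof. apply (proj1 (ijoin_lub W)). Qed.

Lemma ijoin_ile W (y : K) : (forall w, W w -> ile w y) -> ile (ijoin K W) y.
Proof. apply (proj2 (ijoin_lub W)). Qed.

Lemma ile_join2l (x y : K) : ile x (ijoin2 x y).
Proof. apply ile_ijoin; left; auto. Qed.

Lemma ile_join2r (x y : K) : ile y (ijoin2 x y).
Proof. apply ile_ijoin; right; auto. Qed.

Lemma join2_ile (x y z : K) : ile x z -> ile y z -> ile (ijoin2 x y) z.
Proof. intros; apply ijoin_ile; intros w [-> | ->]; auto. Qed.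

Lemma ijoin_single (x : K) : ijoin K (fun z => z = x) = x.
Proof.
  apply ile_antisym; [apply ijoin_ile; intros w -> | apply ile_ijoin]; auto using ile_refl.
Qed.

Lemma ijoin_bigcup {I : Type} (W : I -> Prop) (F : I -> K -> Prop) :
  ijoin K (fun s => exists i, W i /\ F i s) = ijoin K (image (fun i => ijoin K (F i)) W).
Proof.
  apply ile_antisym; apply ijoin_ile.
  - intros s (i & Hi & Hs). apply ile_trans with (ijoin K (F i)); apply ile_ijoin; auto.
    exists i; auto.
  - intros w (i & Hi & ->). apply ijoin_ile. intros s Hs. apply ile_ijoin. exists i; auto.
Qed.

Lemma ijoin_mul (S1 S2 : K -> Prop) :
  ijoin K (fun z => exists a b, S1 a /\ S2 b /\ z = imul K a b) =
  imul K (ijoin K S1) (ijoin K S2).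
Proof.
  rewrite imul_joinl. apply ile_antisym; apply ijoin_ile.
  - intros z (a & b & Ha & Hb & ->). apply ile_trans with (imul K a (ijoin K S2)).
    + rewrite imul_joinr. apply ile_ijoin. exists b; auto.
    + apply ile_ijoin. exists a; auto.
  - intros z (a & Ha & ->). rewrite imul_joinr. apply ijoin_ile.
    intros w (b & Hb & ->). apply ile_ijoin. exists a, b; auto.
Qed.

Lemma isim3 (x : K) : isim K (isim K (isim K x)) = isim K x.
Proof.
  pose proof (isim_join_simsim (fun z => z = x)) as H.
  rewrite image_single, !ijoin_single in H. exact H.
Qed.

Lemma test_simsim (t : K) : test t -> isim K (isim K t) = t.
Proof. intros [l ->]; apply isim3. Qed.

Lemma isim_join2_simsim (x y : K) :
  isim K (ijoin2 x y) = isim K (ijoin2 (isim K (isim K x)) (isim K (isim K y))).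
Proof.
  unfold ijoin2. rewrite <- (isim_join_simsim (pair2 x y)), image_pair. reflexivity.
Qed.

End IDATheory.

Section IDAMorphisms.
Context {K L : IDAsig} (f : K -> L) (Hf : IDA_morph f).

Lemma morph_join2 (x y : K) : f (ijoin2 x y) = ijoin2 (f x) (f y).
Proof. unfold ijoin2. rewrite (morph_join Hf), image_pair; reflexivity. Qed.

Lemma morph_dot (x y : K) : f (dot x y) = dot (f x) (f y).
Proof. unfold dot. rewrite !(morph_sim Hf), (morph_mul Hf). reflexivity. Qed.

Lemma morph_test (x : K) : test x -> test (f x).
Proof. intros [l ->]. exists (f l). apply (morph_sim Hf). Qed.

Lemma morph_inv (g : L -> K) :
  (forall x, g (f x) = x) -> (forall y, f (g y) = y) -> IDA_morph g.
Proof.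
  intros gf fg.
  assert (f_inj : forall a b, f a = f b -> a = b).
  { intros a b H. rewrite <- (gf a), <- (gf b), H; reflexivity. }
  constructor; intros; apply f_inj.
  - rewrite fg, (morph_join Hf), image_comp.
    replace (fun x => f (g x)) with (fun x : L => x) by (apply functional_extensionality; auto).
    rewrite image_id; reflexivity.
  - rewrite (morph_mul Hf), !fg; reflexivity.
  - rewrite (morph_star Hf), !fg; reflexivity.
  - rewrite (morph_unit Hf), !fg; reflexivity.
  - rewrite (morph_sim Hf), !fg; reflexivity.
Qed.

Hypothesis f_inj : forall x y, f x = f y -> x = y.

Lemma ile_inj_morph (x y : K) : ile x y <-> ile (f x) (f y).
Proof.
  unfold ile. rewrite <- morph_join2.
  split; intro H; [rewrite H | apply f_inj]; auto.
Qed.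

Lemma tle_inj_morph (x y : K) : tle x y <-> tle (f x) (f y).
Proof.
  unfold tle, vee. rewrite <- (image_pair f x y), <- (morph_join Hf), <- !(morph_sim Hf).
  split; intro H; [rewrite H | apply f_inj]; auto.
Qed.

End IDAMorphisms.

Section COLTheory.
Context {M : COLsig} (HM : isCOL M).

Lemma cle_refl (x : M) : cle M x x.
Proof. apply (proj1 HM). Qed.

Lemma cle_antisym (x y : M) : cle M x y -> cle M y x -> x = y.
Proof. apply (proj1 HM). Qed.

Lemma cle_trans (x y z : M) : cle M x y -> cle M y z -> cle M x z.
Proof. apply (proj1 HM). Qed.

Lemma cle_csup W (w : M) : W w -> cle M w (csup M W).
Proof. apply (proj1 (proj1 (proj2 HM) W)). Qed.

Lemma csup_le W (y : M) : (forall w, W w -> cle M w y) -> cle M (csup M W) y.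
Proof. apply (proj2 (proj1 (proj2 HM) W)). Qed.

Lemma cperpK (x : M) : cperp M (cperp M x) = x.
Proof. apply HM. Qed.

Lemma cperp_anti (x y : M) : cle M x y -> cle M (cperp M y) (cperp M x).
Proof. apply HM. Qed.

Lemma cmeet_perp (x : M) : cmeet2 x (cperp M x) = @cbot M.
Proof. apply HM. Qed.

Lemma cle_perpr (x y : M) : cle M x (cperp M y) -> cle M y (cperp M x).
Proof. intro H. apply cperp_anti in H. rewrite cperpK in H. exact H. Qed.

Lemma cle_perpl (x y : M) : cle M (cperp M x) y -> cle M (cperp M y) x.
Proof. intro H. apply cperp_anti in H. rewrite cperpK in H. exact H. Qed.

Lemma cmeet_lel (x y : M) : cle M (cmeet2 x y) x.
Proof. apply csup_le. intros w [H _]; auto. Qed.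

Lemma cmeet_ler (x y : M) : cle M (cmeet2 x y) y.
Proof. apply csup_le. intros w [_ H]; auto. Qed.

Lemma cle_meet (x y z : M) : cle M z x -> cle M z y -> cle M z (cmeet2 x y).
Proof. intros; apply cle_csup; auto. Qed.

Lemma cle_join2l (x y : M) : cle M x (cjoin2 x y).
Proof. apply cle_csup; auto. Qed.

Lemma cle_join2r (x y : M) : cle M y (cjoin2 x y).
Proof. apply cle_csup; auto. Qed.

Lemma cjoin2_le (x y z : M) : cle M x z -> cle M y z -> cle M (cjoin2 x y) z.
Proof. intros; apply csup_le; intros w [-> | ->]; auto. Qed.

Lemma cjoin2_idem (x : M) : cjoin2 x x = x.
Proof. apply cle_antisym; [apply cjoin2_le | apply cle_join2l]; apply cle_refl. Qed.

Lemma cmeet2_demorgan (x y : M) :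
  cmeet2 x y = cperp M (cjoin2 (cperp M x) (cperp M y)).
Proof.
  apply cle_antisym.
  - apply cle_perpr, cjoin2_le; apply cperp_anti; [apply cmeet_lel | apply cmeet_ler].
  - apply cle_meet; apply cle_perpl; [apply cle_join2l | apply cle_join2r].
Qed.

Lemma ctop_of_perp_le (a : M) : cle M (cperp M a) a -> @ctop M = a.
Proof.
  intro Ha.
  assert (Hbot : cle M (cperp M a) (@cbot M)).
  { rewrite <- (cmeet_perp a). apply cle_meet; auto using cle_refl. }
  apply cle_antisym; [| apply cle_csup; auto].
  rewrite <- (cperpK a). apply cle_perpr.
  apply cle_trans with (@cbot M); auto. apply csup_le; intros w [].
Qed.

End COLTheory.

Section TestLattice.
Context {K : IDAsig} (HK : is_IDA K).

Definition test_values (W : TestT K -> Prop) : K -> Prop :=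
  fun k => exists t, W t /\ k = proj1_sig t.

Lemma Psi_vee_lub (W : TestT K -> Prop) : is_lub (@Psi_le K) W (Psi_vee W).
Proof.
  set (X := ijoin K (test_values W)).
  split.
  - intros t Ht. set (x := proj1_sig t).
    change (isim K (isim K (ijoin2 x (isim K (isim K X)))) = isim K (isim K X)).
    assert (Hx : isim K (isim K x) = x) by apply (test_simsim HK), proj2_sig.
    assert (E : isim K (ijoin2 x X) = isim K X).
    { f_equal. apply (ile_ijoin HK). exists t; auto. }
    rewrite (isim_join2_simsim HK x X), Hx in E. rewrite E. reflexivity.
  - intros u Hu. set (y := proj1_sig u).
    change (isim K (isim K (ijoin2 (isim K (isim K X)) y)) = y).
    assert (Hy : isim K (isim K y) = y) by apply (test_simsim HK), proj2_sig.
    (* [X ⊔ y] is the join of [V], whose members all have double complement [y]. *)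
    set (V := fun z => z = y \/ exists t, W t /\ z = ijoin2 (proj1_sig t) y).
    assert (HV : ijoin K V = ijoin2 X y).
    { apply (ile_antisym HK); apply (ijoin_ile HK).
      - intros w [-> | (t & Ht & ->)]; [apply (ile_join2r HK) | apply (join2_ile HK)].
        + apply (ile_trans HK) with X; [| apply (ile_join2l HK)].
          apply (ile_ijoin HK). exists t; auto.
        + apply (ile_join2r HK).
      - intros w [-> | ->].
        + apply (ijoin_ile HK). intros w (t & Ht & ->).
          apply (ile_trans HK) with (ijoin2 (proj1_sig t) y); [apply (ile_join2l HK) |].
          apply (ile_ijoin HK). right; exists t; auto.
        + apply (ile_ijoin HK). left; auto. }
    assert (HssV : image (fun x => isim K (isim K x)) V = (fun z => z = y)).
    { apply pred_ext; intro z; split.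
      - intros (v & [-> | (t & Ht & ->)] & ->); auto. apply Hu; auto.
      - intros ->. exists y; split; auto. left; auto. }
    assert (E : isim K (ijoin2 X y) = isim K y).
    { rewrite <- HV, <- (isim_join_simsim HK), HssV, (ijoin_single HK). reflexivity. }
    rewrite (isim_join2_simsim HK X y), Hy in E. rewrite E. exact Hy.
Qed.

Context (HC : isCOL (Psi K)).

Lemma Psi_csup W : csup (Psi K) W = Psi_vee W.
Proof.
  destruct (Psi_vee_lub W) as [Hub Hleast].
  apply (cle_antisym HC); [apply (csup_le HC), Hub |].
  apply Hleast. intros; apply (cle_csup HC); auto.
Qed.

Lemma proj_Psi_perp (u : Psi K) : proj1_sig (cperp (Psi K) u) = isim K (proj1_sig u).
Proof. reflexivity. Qed.

Lemma proj_Psi_csup W : proj1_sig (csup (Psi K) W) = vee (test_values W).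
Proof. rewrite Psi_csup; reflexivity. Qed.

Lemma proj_Psi_join2 (u v : Psi K) :
  proj1_sig (cjoin2 u v) = vee (pair2 (proj1_sig u) (proj1_sig v)).
Proof.
  unfold cjoin2. rewrite proj_Psi_csup. f_equal.
  apply pred_ext; intro z; unfold test_values, pair2; split.
  - intros (t & [-> | ->] & ->); auto.
  - intros [-> | ->]; eauto.
Qed.

Lemma proj_Psi_sasaki (m v : Psi K) :
  proj1_sig (pi_ m v) =
  isim K (ijoin2 (isim K (proj1_sig m)) (isim K (ijoin2 (isim K (proj1_sig m)) (proj1_sig v)))).
Proof.
  unfold pi_. rewrite (cmeet2_demorgan HC).
  rewrite proj_Psi_perp, proj_Psi_join2, !proj_Psi_perp, proj_Psi_join2, proj_Psi_perp.
  unfold vee. rewrite !(isim3 HK). reflexivity.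
Qed.

Lemma proj_Psi_ctop : proj1_sig (@ctop (Psi K)) = isim K (isim K (iunit K)).
Proof.
  pose (a := exist test (isim K (isim K (iunit K))) (ex_intro _ _ eq_refl) : Psi K).
  enough (E : @ctop (Psi K) = a) by (rewrite E; reflexivity).
  (* By the last ~-axiom with [y = 1], every test [b] equals [b ∧ (b^⊥ ∨ a)]; so [a^⊥ ≤ a]. *)
  assert (Ha : forall b : Psi K, pi_ b a = b).
  { intro b. apply sig_eq. rewrite proj_Psi_sasaki. set (x := proj1_sig b).
    assert (Hx : isim K (isim K x) = x) by apply (test_simsim HK), proj2_sig.
    change (proj1_sig a) with (isim K (isim K (iunit K))).
    rewrite <- (isim3 HK x) at 2.
    rewrite <- (isim_join2_simsim HK (isim K x) (iunit K)), <- (simsim_mul_sasaki HK).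
    rewrite (imul_unitr HK), !Hx. reflexivity. }
  apply (ctop_of_perp_le HC).
  rewrite <- (Ha (cperp (Psi K) a)) at 1.
  apply (cle_trans HC) with (cjoin2 (cperp (Psi K) (cperp (Psi K) a)) a); [apply (cmeet_ler HC) |].
  rewrite (cperpK HC), (cjoin2_idem HC). apply (cle_refl HC).
Qed.

End TestLattice.

Ltac push_morph Hg :=
  repeat first [ rewrite (morph_sim Hg) | rewrite (morph_mul Hg) | rewrite (morph_star Hg)
               | rewrite (morph_unit Hg) | rewrite (morph_join2 _ Hg) ].

Lemma is_IDA_inj_morph {K L : IDAsig} (g : L -> K) :
  IDA_morph g -> (forall x y, g x = g y -> x = y) -> is_IDA K -> is_IDA L.
Proof.
  intros Hg g_inj HK.
  assert (Hle : forall x y, ile x y <-> ile (g x) (g y)) by (intros; apply ile_inj_morph; auto).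
  assert (Hpo : is_partial_order (@ile L)).
  { split; [| split].
    - intro x; apply Hle, (ile_refl HK).
    - intros x y H1 H2; apply g_inj, (ile_antisym HK); apply Hle; auto.
    - intros x y z H1 H2; apply Hle; apply (ile_trans HK) with (g y); apply Hle; auto. }
  assert (Hlub : forall W, is_lub (@ile L) W (ijoin L W)).
  { intro W; split.
    - intros w Hw. apply Hle. rewrite (morph_join Hg). apply (ile_ijoin HK). exists w; auto.
    - intros y Hy. apply Hle. rewrite (morph_join Hg). apply (ijoin_ile HK).
      intros z (w & Hw & ->). apply Hle; auto. }
  refine (conj Hpo (conj Hlub _)).
  repeat split; intros; apply g_inj; push_morph Hg; rewrite ?(morph_join Hg), ?image_comp.
  - apply (imulA HK).
  - apply (imul_unitl HK).
  - apply (imul_unitr HK).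
  - rewrite (imul_joinr HK), image_comp.
    f_equal; f_equal; apply functional_extensionality; intro; push_morph Hg; reflexivity.
  - rewrite (imul_joinl HK), image_comp.
    f_equal; f_equal; apply functional_extensionality; intro; push_morph Hg; reflexivity.
  - apply (istarK HK).
  - apply (istar_mul HK).
  - rewrite (istar_join HK), image_comp.
    f_equal; f_equal; apply functional_extensionality; intro; push_morph Hg; reflexivity.
  - apply (isim_mul_simsim HK).
  - rewrite <- (isim_join_simsim HK (image g W)), image_comp.
    f_equal; f_equal; f_equal; apply functional_extensionality; intro; push_morph Hg; reflexivity.
  - apply (istar_sim HK).
  - apply (simsim_mul_sasaki HK).
Qed.

Section COLTransport.
Context {M N : COLsig} (F : M -> N) (G : N -> M).
Hypotheses (FG : forall y, F (G y) = y) (GF : forall x, G (F x) = x).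
Hypothesis G_cle : forall a b, cle N a b <-> cle M (G a) (G b).
Hypothesis G_cperp : forall a, G (cperp N a) = cperp M (G a).
Hypothesis G_csup : forall W, G (csup N W) = csup M (image G W).

Lemma G_csup_image (W : N -> Prop) (V : M -> Prop) :
  (forall x, V x <-> W (F x)) -> G (csup N W) = csup M V.
Proof.
  intro HV. rewrite G_csup. f_equal. apply pred_ext; intro x; rewrite HV; split.
  - intros (y & Hy & ->). rewrite FG; auto.
  - intro Hx. exists (F x); auto.
Qed.

Lemma G_cmeet2 x y : G (cmeet2 x y) = cmeet2 (G x) (G y).
Proof. apply G_csup_image; intro; rewrite !G_cle, GF; reflexivity. Qed.

Lemma G_cjoin2 x y : G (cjoin2 x y) = cjoin2 (G x) (G y).
Proof.
  apply G_csup_image; intro z; split.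
  - intros [-> | ->]; rewrite FG; auto.
  - intros [H | H]; apply (f_equal G) in H; rewrite GF in H; auto.
Qed.

Lemma G_cbot : G (@cbot N) = @cbot M.
Proof. apply G_csup_image; tauto. Qed.

Lemma G_ctop : G (@ctop N) = @ctop M.
Proof. apply G_csup_image; tauto. Qed.

Lemma isCOL_transport : isCOL M -> isCOL N.
Proof.
  intros HM. pose proof HM as (_ & _ & _ & _ & _ & Hcompl & Horthomod).
  split; [| split; [| split; [| split; [| split; [| split]]]]].
  - split; [| split].
    + intro x; apply G_cle, (cle_refl HM).
    + intros x y H1 H2; apply (can_inj G F FG), (cle_antisym HM); apply G_cle; auto.
    + intros x y z H1 H2; apply G_cle; apply (cle_trans HM) with (G y); apply G_cle; auto.
  - intro W; split.
    + intros w Hw; apply G_cle; rewrite G_csup; apply (cle_csup HM); exists w; auto.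
    + intros y Hy; apply G_cle; rewrite G_csup; apply (csup_le HM).
      intros z (w & Hw & ->); apply G_cle; auto.
  - intro x; apply (can_inj G F FG); rewrite !G_cperp; apply (cperpK HM).
  - intros x y H; apply G_cle; rewrite !G_cperp; apply (cperp_anti HM), G_cle, H.
  - intro x; apply (can_inj G F FG); rewrite G_cmeet2, G_cperp, G_cbot; apply (cmeet_perp HM).
  - intro x; apply (can_inj G F FG); rewrite G_cjoin2, G_cperp, G_ctop; apply Hcompl.
  - intros x y H; apply (can_inj G F FG); rewrite G_cjoin2, G_cmeet2, G_cperp.
    apply Horthomod, G_cle, H.
Qed.

End COLTransport.

Lemma Psi_sup_lub (K : IDAsig) (W : TestT K -> Prop) :
  (exists x, is_lub (@Psi_le K) W x) -> is_lub (@Psi_le K) W (Psi_sup W).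
Proof.
  intro H. unfold Psi_sup. destruct (excluded_middle_informative _) as [h | n]; [| contradiction].
  apply (proj2_sig (constructive_indefinite_description _ h)).
Qed.

Lemma TODA_iso_of_inverse {K L : IDAsig} (f : K -> L) (g : L -> K) :
  IDA_morph f -> (forall x, g (f x) = x) -> (forall y, f (g y) = y) -> TODA_iso f.
Proof.
  intros Hf gf fg.
  split; [split; [exact Hf | exists g; auto] |].
  exists g. split; [| auto].
  split; [exact (morph_inv f Hf g gf fg) | exists f; auto].
Qed.

Section TODATransport.
Context {K L : IDAsig} (f : K -> L) (g : L -> K) (Hf : IDA_morph f).
Hypotheses (gf : forall x, g (f x) = x) (fg : forall y, f (g y) = y).

Let Hg : IDA_morph g := morph_inv f Hf g gf fg.
Let g_inj : forall y1 y2, g y1 = g y2 -> y1 = y2 := can_inj g f fg.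

Lemma isCOL_Psi_transport : isCOL (Psi K) -> isCOL (Psi L).
Proof.
  intro HC.
  set (F := Psi_map f (morph_sim Hf) : Psi K -> Psi L).
  set (G := Psi_map g (morph_sim Hg) : Psi L -> Psi K).
  assert (FG : forall y, F (G y) = y) by (intro; apply sig_eq, fg).
  assert (GF : forall x, G (F x) = x) by (intro; apply sig_eq, gf).
  assert (G_cle : forall a b, cle (Psi L) a b <-> cle (Psi K) (G a) (G b))
    by (intros; exact (tle_inj_morph g Hg g_inj _ _)).
  apply (isCOL_transport F G FG GF G_cle); auto.
  - intro a; apply sig_eq, (morph_sim Hg).
  - intro W. set (s := csup (Psi K) (image G W)).
    assert (Hs : is_lub (cle (Psi L)) W (F s)).
    { split.
      - intros w Hw. apply G_cle. rewrite GF. apply (cle_csup HC). exists w; auto.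
      - intros u Hu. apply G_cle. rewrite GF. apply (csup_le HC).
        intros z (w & Hw & ->). apply G_cle; auto. }
    destruct (Psi_sup_lub L W (ex_intro _ _ Hs)) as [Hub Hleast].
    apply (cle_antisym HC).
    + rewrite <- (GF s). apply G_cle, Hleast, Hs.
    + apply (csup_le HC). intros z (w & Hw & ->). apply G_cle, Hub, Hw.
Qed.

Context (T : Tfun) (HTf : T_functor T).

Lemma TODA_transport : TODA T K -> TODA T L.
Proof.
  intros (HK & HC & Hgen & Hjoin_inj & Hequiv).
  assert (HL : is_IDA L) by exact (is_IDA_inj_morph g Hg g_inj HK).
  assert (gT : forall y, T L y -> T K (g y)) by (intros; apply (HTf L K g); auto).
  split; [| split; [| split; [| split]]]; auto using isCOL_Psi_transport.
  - intros A HA1 HA2 HA3 HA4 y. rewrite <- (fg y).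
    apply (Hgen (fun x => A (f x))).
    + intros x Hx. apply HA1, (HTf K L f); auto.
    + intros x z Hx Hz. rewrite (morph_mul Hf). auto.
    + intros x Hx. rewrite (morph_star Hf). auto.
    + intros W HW. rewrite (morph_join Hf). apply HA4. intros x (a & Ha & ->). auto.
  - intros S S' HS HS'. split; [intro E | intro E; f_equal; apply pred_ext; auto].
    assert (E' : forall x, image g S x <-> image g S' x).
    { apply Hjoin_inj; try (intros x (a & Ha & ->); auto).
      rewrite <- !(morph_join Hg), E; reflexivity. }
    intro x; split; intro Hx.
    + destruct (proj1 (E' (g x))) as (y & Hy & Exy); [exists x; auto |].
      apply g_inj in Exy; subst; auto.
    + destruct (proj2 (E' (g x))) as (y & Hy & Exy); [exists x; auto |].
      apply g_inj in Exy; subst; auto.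
  - intros s t Hs Ht. split; [intros -> w _; reflexivity | intro E].
    apply g_inj, Hequiv; auto.
    intros w Hw. rewrite <- (gf w), <- !(morph_dot g Hg).
    f_equal. apply E, (morph_test f Hf), Hw.
Qed.

End TODATransport.

Lemma mkLin_eq (M : COLsig) (g : M -> M) (h : has_adj M g) : mkLin M g = exist _ g h.
Proof.
  unfold mkLin. destruct (excluded_middle_informative _) as [h' | n]; [| contradiction].
  apply sig_eq; reflexivity.
Qed.

Lemma is_adjoint_sym (M : COLsig) (HM : isCOL M) (f g : M -> M) :
  is_adjoint M f g -> is_adjoint M g f.
Proof. intros H x y. split; intro Hxy; apply (cle_perpr HM), H, (cle_perpr HM), Hxy. Qed.

Lemma lin_adj_has_adj (M : COLsig) (HM : isCOL M) (f : LinT M) : has_adj M (lin_adj M f).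
Proof.
  exists (proj1_sig f). apply is_adjoint_sym; auto.
  apply (proj2_sig (constructive_indefinite_description _ _)).
Qed.

Section Lambda.
Variable T : Tfun.
Hypotheses (HTf : T_functor T) (HT1 : T1 T) (HT2 : T2 T).
Variable K : IDAsig.
Hypothesis HT : TODA T K.

Let HK : is_IDA K := proj1 HT.
Let HC : isCOL (Psi K) := proj1 (proj2 HT).
Let T_generates := proj1 (proj2 (proj2 HT)).
Let T_join_inj := proj1 (proj2 (proj2 (proj2 HT))).
Let T_eq_equivK := proj2 (proj2 (proj2 (proj2 HT))).

Lemma T_test k : test k -> T K k.
Proof. apply (HT1 K HK). Qed.

Lemma T_unit : T K (iunit K).
Proof. apply (HT1 K HK). Qed.

Lemma T_mul x y : T K x -> T K y -> T K (imul K x y).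
Proof. apply (HT1 K HK). Qed.

Lemma T_star x : T K x -> T K (istar K x).
Proof. apply (HT1 K HK). Qed.

Lemma T_decomposition k : exists S : K -> Prop, (forall s, S s -> T K s) /\ ijoin K S = k.
Proof.
  apply (T_generates (fun k => exists S : K -> Prop, (forall s, S s -> T K s) /\ ijoin K S = k)).
  - intros x Hx. exists (fun z => z = x). split; [intros s ->; auto | apply (ijoin_single HK)].
  - intros x y (S1 & HS1 & <-) (S2 & HS2 & <-).
    exists (fun z => exists a b, S1 a /\ S2 b /\ z = imul K a b). split.
    + intros s (a & b & Ha & Hb & ->). apply T_mul; auto.
    + apply (ijoin_mul HK).
  - intros x (S & HS & <-). exists (image (istar K) S). split.
    + intros s (a & Ha & ->). apply T_star; auto.
    + rewrite (istar_join HK); auto.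
  - intros W HW.
    set (SS := fun S : K -> Prop => (forall s, S s -> T K s) /\ W (ijoin K S)).
    exists (fun s => exists S, SS S /\ S s). split; [intros s (S & [HS _] & Hs); auto |].
    rewrite (ijoin_bigcup HK). f_equal. apply pred_ext; intro w; split.
    + intros (S & [_ Hw] & ->); auto.
    + intro Hw. destruct (HW w Hw) as (S & HS & <-). exists S; repeat split; auto.
Qed.

Lemma Sk_spec k : (forall s, Sk T k s -> T K s) /\ ijoin K (Sk T k) = k.
Proof.
  unfold Sk. destruct (excluded_middle_informative _) as [h | n].
  - apply (proj2_sig (constructive_indefinite_description _ h)).
  - exfalso; apply n, T_decomposition.
Qed.

Lemma Sk_T k s : Sk T k s -> T K s.
Proof. apply Sk_spec. Qed.

Lemma Sk_join k : ijoin K (Sk T k) = k.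
Proof. apply Sk_spec. Qed.

Lemma Sk_unique k S : (forall s, S s -> T K s) -> ijoin K S = k -> Sk T k = S.
Proof.
  intros HS E. apply pred_ext, T_join_inj; [exact (Sk_T k) | exact HS | rewrite Sk_join; auto].
Qed.

Let nu_spec := HT2 K HK HC T_eq_equivK.

Lemma nu_has_adj s : T K s -> has_adj (Psi K) (nu s).
Proof. apply nu_spec. Qed.

Definition TLin : Type := {f : LinT (Psi K) | T (Lin (Psi K)) f}.

Definition lin_fun (c : TLin) : TestT K -> TestT K := proj1_sig (proj1_sig c).

Lemma nu_T s : T K s -> T (Lin (Psi K)) (mkLin (Psi K) (nu s)).
Proof. apply nu_spec. Qed.

Definition nuT s (h : T K s) : TLin := exist _ (mkLin (Psi K) (nu s)) (nu_T s h).

Lemma lin_fun_nuT s h : lin_fun (nuT s h) = nu s.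
Proof. unfold lin_fun, nuT; simpl. rewrite (mkLin_eq _ _ (nu_has_adj s h)). reflexivity. Qed.

Lemma lin_fun_inj (c c' : TLin) : lin_fun c = lin_fun c' -> c = c'.
Proof. intro E. apply sig_eq, sig_eq, E. Qed.

Lemma lin_fun_surj (c : TLin) : exists s, T K s /\ lin_fun c = nu s.
Proof.
  destruct nu_spec as (_ & _ & Hsurj & _). destruct (Hsurj _ (proj2_sig c)) as (s & Hs & E).
  exists s; split; auto.
  unfold lin_fun. rewrite <- E, (mkLin_eq _ _ (nu_has_adj s Hs)). reflexivity.
Qed.

Lemma nu_inj s t : T K s -> T K t -> nu s = nu t -> s = t.
Proof.
  intros Hs Ht E. destruct nu_spec as (_ & _ & _ & Hinj & _).
  apply Hinj; auto. rewrite E; reflexivity.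
Qed.

Lemma nu_mul s t : nu (imul K s t) = fun v => nu s (nu t v).
Proof.
  apply functional_extensionality; intro v. apply sig_eq. simpl. unfold dot.
  f_equal. rewrite (isim_mul_simsim HK), (imulA HK). reflexivity.
Qed.

Lemma nu_unit : nu (iunit K) = fun v => v.
Proof.
  apply functional_extensionality; intro v. apply sig_eq. simpl. unfold dot.
  rewrite (imul_unitl HK). apply (test_simsim HK), proj2_sig.
Qed.

Lemma lin_adj_nu (c : TLin) s :
  T K s -> lin_fun c = nu s -> lin_adj (Psi K) (proj1_sig c) = nu (istar K s).
Proof.
  intros Hs E. destruct nu_spec as (_ & _ & _ & _ & _ & Hstar & _).
  pose proof (Hstar s Hs) as H. simpl in H.
  rewrite (mkLin_eq _ _ (nu_has_adj _ (T_star s Hs))), (mkLin_eq _ _ (lin_adj_has_adj _ HC _)) in H.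
  apply (f_equal (@proj1_sig _ _)) in H. simpl in H. rewrite H.
  f_equal. rewrite (mkLin_eq _ _ (nu_has_adj s Hs)). apply sig_eq, E.
Qed.

Definition nu_image (S : K -> Prop) : Gamma T (Psi K) :=
  fun c => exists s, S s /\ lin_fun c = nu s.

Lemma lambdaE k : lambda T k = nu_image (Sk T k).
Proof. reflexivity. Qed.

Lemma lambda_ijoin_T S : (forall s, S s -> T K s) -> lambda T (ijoin K S) = nu_image S.
Proof. intro HS. rewrite lambdaE, (Sk_unique _ S HS eq_refl). reflexivity. Qed.

Lemma Gamma_mulE A B : imul (Gamma T (Psi K)) A B =
  fun c => exists a b, A a /\ B b /\ lin_fun c = (fun x => lin_fun a (lin_fun b x)).
Proof. reflexivity. Qed.

Lemma Gamma_starE A : istar (Gamma T (Psi K)) A =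
  fun c => exists a, A a /\ lin_fun c = lin_adj (Psi K) (proj1_sig a).
Proof. reflexivity. Qed.

Lemma Gamma_unitE : iunit (Gamma T (Psi K)) = fun c => lin_fun c = (fun x => x).
Proof. reflexivity. Qed.

Lemma Gamma_simE A : isim (Gamma T (Psi K)) A =
  fun c => lin_fun c = pi_ (cperp (Psi K)
             (csup (Psi K) (fun z => exists a, A a /\ z = lin_fun a (@ctop (Psi K))))).
Proof. reflexivity. Qed.

Definition lambda_inv (A : Gamma T (Psi K)) : K :=
  ijoin K (fun s => T K s /\ exists c, A c /\ lin_fun c = nu s).

Lemma lambda_invK A : lambda T (lambda_inv A) = A.
Proof.
  unfold lambda_inv. rewrite lambda_ijoin_T by (intros s [Hs _]; exact Hs).
  apply pred_ext; intro c; split.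
  - intros (s & (Hs & c' & Hc' & E') & E). replace c with c'; auto. apply lin_fun_inj. congruence.
  - intro Hc. destruct (lin_fun_surj c) as (s & Hs & E). exists s; split; auto. split; auto.
    exists c; auto.
Qed.

Lemma lambdaK k : lambda_inv (lambda T k) = k.
Proof.
  rewrite lambdaE. rewrite <- (Sk_join k) at 2. unfold lambda_inv. f_equal.
  apply pred_ext; intro s; split.
  - intros (Hs & c & (s' & Hs' & E') & E). replace s with s'; auto.
    apply nu_inj; [exact (Sk_T k s' Hs') | exact Hs | congruence].
  - intro Hs. pose proof (Sk_T k s Hs) as HTs. split; auto.
    exists (nuT s HTs). split; [exists s; split |]; auto using lin_fun_nuT.
Qed.

Lemma lambda_join W : lambda T (ijoin K W) = ijoin (Gamma T (Psi K)) (image (lambda T) W).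
Proof.
  assert (HW : ijoin K W = ijoin K (fun s => exists w, W w /\ Sk T w s)).
  { rewrite (ijoin_bigcup HK).
    replace (fun w => ijoin K (Sk T w)) with (fun w : K => w)
      by (apply functional_extensionality; intro; symmetry; apply Sk_join).
    rewrite image_id; reflexivity. }
  rewrite HW, lambda_ijoin_T by (intros s (w & _ & Hs); exact (Sk_T w s Hs)).
  apply pred_ext; intro c; split.
  - intros (s & (w & Hw & Hs) & E). exists (lambda T w). split; [exists w | exists s]; auto.
  - intros (A & (w & Hw & ->) & (s & Hs & E)). exists s; split; eauto.
Qed.

Lemma lambda_mul k l :
  lambda T (imul K k l) = imul (Gamma T (Psi K)) (lambda T k) (lambda T l).
Proof.
  assert (E : imul K k l = ijoin K (fun z => exists a b, Sk T k a /\ Sk T l b /\ z = imul K a b))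
    by (rewrite (ijoin_mul HK), !Sk_join; reflexivity).
  rewrite E, lambda_ijoin_T, Gamma_mulE, !lambdaE.
  2: intros z (a & b & Ha & Hb & ->); apply T_mul; [exact (Sk_T k a Ha) | exact (Sk_T l b Hb)].
  apply pred_ext; intro c; split.
  - intros (z & (s & t & Hs & Ht & ->) & Ec).
    exists (nuT s (Sk_T k s Hs)), (nuT t (Sk_T l t Ht)).
    rewrite !lin_fun_nuT, Ec, nu_mul.
    split; [exists s | split; [exists t |]]; auto using lin_fun_nuT.
  - intros (a & b & (s & Hs & Ea) & (t & Ht & Eb) & Ec).
    exists (imul K s t). split; [exists s, t; auto |]. rewrite Ec, Ea, Eb, nu_mul. reflexivity.
Qed.

Lemma lambda_star k : lambda T (istar K k) = istar (Gamma T (Psi K)) (lambda T k).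
Proof.
  rewrite <- (Sk_join k) at 1.
  rewrite (istar_join HK), lambda_ijoin_T, Gamma_starE, lambdaE.
  2: intros z (s & Hs & ->); apply T_star, (Sk_T k s Hs).
  apply pred_ext; intro c; split.
  - intros (z & (s & Hs & ->) & Ec). exists (nuT s (Sk_T k s Hs)).
    split; [exists s; split; auto using lin_fun_nuT |].
    rewrite Ec. symmetry. apply lin_adj_nu; [exact (Sk_T k s Hs) | apply lin_fun_nuT].
  - intros (a & (s & Hs & Ea) & Ec). exists (istar K s). split; [exists s; auto |].
    rewrite Ec. apply lin_adj_nu; [exact (Sk_T k s Hs) | exact Ea].
Qed.

Lemma lambda_unit : lambda T (iunit K) = iunit (Gamma T (Psi K)).
Proof.
  rewrite <- (ijoin_single HK (iunit K)), lambda_ijoin_T, Gamma_unitE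
    by (intros s ->; apply T_unit).
  apply pred_ext; intro c; split.
  - intros (s & -> & Ec). rewrite Ec, nu_unit. reflexivity.
  - intro Ec. exists (iunit K). split; auto. rewrite Ec, nu_unit. reflexivity.
Qed.

Lemma lambda_sim k : lambda T (isim K k) = isim (Gamma T (Psi K)) (lambda T k).
Proof.
  assert (HS : lambda T (isim K k) = nu_image (fun s => s = isim K k)).
  { rewrite <- lambda_ijoin_T, (ijoin_single HK); auto. intros s ->; apply T_test; exists k; auto. }
  rewrite HS, Gamma_simE, lambdaE.
  set (Z := fun z => exists a, nu_image (Sk T k) a /\ z = lin_fun a (@ctop (Psi K))).
  set (m := cperp (Psi K) (csup (Psi K) Z)).
  assert (HZ : test_values Z =
               image (fun x => isim K (isim K x))
                 (image (fun s => imul K s (isim K (isim K (iunit K)))) (Sk T k))).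
  { rewrite image_comp. apply pred_ext; intro x; split.
    - intros (t & (a & (s & Hs & Ea) & ->) & ->). exists s; split; auto.
      rewrite Ea. change (dot s (proj1_sig (@ctop (Psi K))) = dot s (isim K (isim K (iunit K)))).
      rewrite (proj_Psi_ctop HK HC). reflexivity.
    - intros (s & Hs & ->). pose proof (Sk_T k s Hs) as HTs.
      exists (nu s (@ctop (Psi K))). split.
      + exists (nuT s HTs). split; [exists s; split |]; rewrite ?lin_fun_nuT; auto.
      + change (dot s (isim K (isim K (iunit K))) = dot s (proj1_sig (@ctop (Psi K)))).
        rewrite (proj_Psi_ctop HK HC). reflexivity. }
  assert (Hm : proj1_sig m = isim K k).
  { unfold m. rewrite proj_Psi_perp, (proj_Psi_csup HK HC). unfold vee. rewrite (isim3 HK), HZ.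
    rewrite (isim_join_simsim HK), <- (imul_joinl HK), Sk_join.
    rewrite (isim_mul_simsim HK), (imul_unitr HK). reflexivity. }
  assert (Hnu : nu (isim K k) = pi_ m).
  { apply functional_extensionality; intro v. apply sig_eq.
    rewrite (proj_Psi_sasaki HK HC), Hm. simpl. unfold dot.
    rewrite <- (isim3 HK k) at 1. apply (simsim_mul_sasaki HK). }
  apply pred_ext; intro c; split.
  - intros (s & -> & Ec). rewrite Ec, Hnu. reflexivity.
  - intro Ec. exists (isim K k). split; auto. rewrite Hnu. exact Ec.
Qed.

Lemma lambda_IDA_morph : IDA_morph (lambda T (K := K)).
Proof.
  constructor; [exact lambda_join | exact lambda_mul | exact lambda_star
               | exact lambda_unit | exact lambda_sim].
Qed.

Lemma lambda_TODA_iso : TODA T (Gamma T (Psi K)) /\ TODA_iso (lambda T (K := K)).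
Proof.
  split.
  - exact (TODA_transport _ lambda_inv lambda_IDA_morph lambdaK lambda_invK T HTf HT).
  - exact (TODA_iso_of_inverse _ lambda_inv lambda_IDA_morph lambdaK lambda_invK).
Qed.

End Lambda.

Lemma Sk_morph (T : Tfun) (HTf : T_functor T) (HT1 : T1 T) {K L : IDAsig} (phi : K -> L) :
  IDA_morph phi -> TODA T K -> TODA T L -> forall k, Sk T (phi k) = image phi (Sk T k).
Proof.
  intros Hphi HK HL k. apply (Sk_unique T HT1 L HL).
  - intros z (s & Hs & ->).
    exact (HTf K L phi (proj1 HK) (proj1 HL) Hphi s (Sk_T T HT1 K HK k s Hs)).
  - rewrite <- (morph_join Hphi), (Sk_join T HT1 K HK). reflexivity.
Qed.

Lemma nu_conj {K L : IDAsig} (phi : K -> L) (Hphi : IDA_morph phi)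
  (kinv : TestT L -> TestT K) :
  (forall t, Psi_map phi (morph_sim Hphi) (kinv t) = t) ->
  forall s x, Psi_map phi (morph_sim Hphi) (nu s (kinv x)) = nu (phi s) x.
Proof.
  intros Hk s x. apply sig_eq. simpl. rewrite (morph_dot phi Hphi).
  pose proof (f_equal (@proj1_sig _ _) (Hk x)) as E. simpl in E. rewrite E. reflexivity.
Qed.

Lemma lambda_natural (T : Tfun) (HTf : T_functor T) (HT1 : T1 T) (HT2 : T2 T)
  {K L : IDAsig} (phi : K -> L) (Hphi : IDA_morph phi) (kinv : TestT L -> TestT K) :
  TODA T K -> TODA T L -> (forall t, Psi_map phi (morph_sim Hphi) (kinv t) = t) ->
  forall k, Gamma_map (M := Psi K) (N := Psi L) T (Psi_map phi (morph_sim Hphi)) kinv (lambda T k)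
            = lambda T (phi k).
Proof.
  intros HK HL Hk k.
  unfold Gamma_map. rewrite !lambdaE, (Sk_morph T HTf HT1 phi Hphi HK HL).
  apply pred_ext; intro c; split.
  - intros (a & (s & Hs & Ea) & Ec). exists (phi s). split; [exists s; auto |].
    unfold lin_fun. rewrite Ec. apply functional_extensionality; intro x.
    change (proj1_sig (proj1_sig a)) with (lin_fun T K a). rewrite Ea. apply nu_conj, Hk.
  - intros (z & (s & Hs & ->) & Ec). pose proof (Sk_T T HT1 K HK k s Hs) as HTs.
    exists (nuT T HT2 K HK s HTs). split; [exists s; split; auto using lin_fun_nuT |].
    change (lin_fun T L c =
            fun x => Psi_map phi (morph_sim Hphi) (lin_fun T K (nuT T HT2 K HK s HTs) (kinv x))).
    rewrite Ec, lin_fun_nuT. apply functional_extensionality; intro x. symmetry; apply nu_conj, Hk.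
Qed.

Theorem theorem6p3 (T : Tfun) :
  T_functor T -> T1 T -> T2 T -> T3 T ->
  (* each component lambda_K is an isomorphism in T-ODA *)
  (forall K : IDAsig, TODA T K ->
     TODA T (Gamma T (Psi K)) /\ TODA_iso (lambda T (K := K))) /\
  (* naturality:  Gamma(Psi(phi)) o lambda_K = lambda_L o phi *)
  (forall (K L : IDAsig) (phi : K -> L) (Hphi : IDA_morph phi),
     TODA T K -> TODA T L -> bijective phi ->
     forall kinv : TestT L -> TestT K,
       (forall t, kinv (Psi_map phi (morph_sim Hphi) t) = t) ->
       (forall t, Psi_map phi (morph_sim Hphi) (kinv t) = t) ->
       forall k : K,
         Gamma_map (M := Psi K) (N := Psi L) T (Psi_map phi (morph_sim Hphi)) kinv (lambda T k)
         = lambda T (phi k)).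
Proof.
  intros HTf HT1 HT2 _. split.
  - intros K HK. exact (lambda_TODA_iso T HTf HT1 HT2 K HK).
  - intros K L phi Hphi HK HL _ kinv _ Hk.
    exact (lambda_natural T HTf HT1 HT2 phi Hphi kinv HK HL Hk).
Qed.
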